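(* Let $\widetilde{E(2)}$ be as described in the context, let $K$ be a real number with $K\neq 0$ and $|K|<1$, let $b:\mathbb{R}\to\mathbb{R}$ be the solution of $$b'(v)=\sqrt{\lambda_1^2-K\left(\lambda_1^2\cos^2 b(v)+\lambda_2^2\sin^2 b(v)\right)},\qquad b(0)=0,$$ and let $x_3:\mathbb{R}\to\mathbb{R}$ be the solution of $x_3'(v)=\dfrac{\lambda_1\lambda_2K}{\lambda_1+b'(v)}$, $x_3(0)=0$. Then the mapping $X:\mathbb{C}\to\widetilde{E(2)}$, $X(u+iv)=(x_1,x_2,x_3)$ with $$x_1(u+iv)=\frac{1}{\lambda_1^2\lambda_2}\left(\frac{1}{\lambda_1}\cos x_3(v)\sin b(v)+\frac{1}{\lambda_2}\sin x_3(v)\cos b(v)\right)x_3'(v)\sinh(-\lambda_1u),$$ $$x_2(u+iv)=\frac{1}{\lambda_1^2\lambda_2}\left(\frac{1}{\lambda_1}\sin x_3(v)\sin b(v)-\frac{1}{\lambda_2}\cos x_3(v)\cos b(v)\right)x_3'(v)\sinh(-\lambda_1u),$$ $$x_3(u+iv)=x_3(v),$$ is a conformal minimal immersion from $\mathbb{C}$ into $\widetilde{E(2)}$ whose Gauss map (for a suitable choice of unit normal) is $g(u+iv)=e^{-\lambda_1u}e^{ib(v)}$.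
   Context: $\widetilde{E(2)}$ is $\mathbb{R}^3$ with coordinates $(x_1,x_2,x_3)$ and group law $(a_1,b_1,c_1)*(a_2,b_2,c_2)=(a_1+a_2\cos c_1-b_2\sin c_1,\ b_1+a_2\sin c_1+b_2\cos c_1,\ c_1+c_2)$, endowed with the left-invariant Riemannian metric $\lambda_1^2(\cos x_3\,dx_1+\sin x_3\,dx_2)^2+\lambda_2^2(-\sin x_3\,dx_1+\cos x_3\,dx_2)^2+\frac{1}{\lambda_1^2\lambda_2^2}dx_3^2$, where either $\lambda_1>\lambda_2>0$ or $\lambda_1=\lambda_2=1$. The left-invariant orthonormal frame is $E_1=\frac{1}{\lambda_1}(\cos x_3\,\partial_{x_1}+\sin x_3\,\partial_{x_2})$, $E_2=\frac{1}{\lambda_2}(-\sin x_3\,\partial_{x_1}+\cos x_3\,\partial_{x_2})$, $E_3=\lambda_1\lambda_2\,\partial_{x_3}$. For an immersed surface with unit normal $N=N_1E_1+N_2E_2+N_3E_3$, its Gauss map is $g=\frac{N_1+iN_2}{1+N_3}\in\mathbb{C}\cup\{\infty\}$ (stereographic projection from the south pole of the left-invariant Gauss map). Points of $\mathbb{C}$ are written $z=u+iv$. *)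

From Stdlib Require Import Reals.
From Coquelicot Require Import Coquelicot.
Open Scope R_scope.

(* Points of the Lie group E(2)~ = R^3, coordinates (x1,x2,x3) indexed 0,1,2. *)
Definition pt := (R * R * R)%type.

Definition coord (p : pt) (i : nat) : R :=
  match i with 0%nat => fst (fst p) | 1%nat => snd (fst p) | _ => snd p end.

Definition upd (p : pt) (i : nat) (t : R) : pt :=
  match i with
  | 0%nat => (t, snd (fst p), snd p)
  | 1%nat => (fst (fst p), t, snd p)
  | _ => (fst (fst p), snd (fst p), t)
  end.

Definition pderiv (f : pt -> R) (i : nat) (p : pt) : R :=
  Derive (fun t => f (upd p i t)) (coord p i).

Definition sum3 (f : nat -> R) : R := f 0%nat + f 1%nat + f 2%nat.

(* Left-invariant coframe theta^a (a = 0,1,2), component i: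
   theta^1 = l1 (cos x3 dx1 + sin x3 dx2), theta^2 = l2(-sin x3 dx1 + cos x3 dx2),
   theta^3 = 1/(l1 l2) dx3, so that the metric is sum_a theta^a (x) theta^a. *)
Definition coframe (l1 l2 : R) (a i : nat) (p : pt) : R :=
  let x3 := coord p 2 in
  match a, i with
  | 0%nat, 0%nat => l1 * cos x3
  | 0%nat, 1%nat => l1 * sin x3
  | 1%nat, 0%nat => - l2 * sin x3
  | 1%nat, 1%nat => l2 * cos x3
  | 2%nat, 2%nat => 1 / (l1 * l2)
  | _, _ => 0
  end.

(* Left-invariant orthonormal frame E_a (a = 0,1,2 for E_1,E_2,E_3), component i
   in the coordinate basis d/dx_i. *)
Definition frame (l1 l2 : R) (a i : nat) (p : pt) : R :=
  let x3 := coord p 2 in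
  match a, i with
  | 0%nat, 0%nat => (1 / l1) * cos x3
  | 0%nat, 1%nat => (1 / l1) * sin x3
  | 1%nat, 0%nat => (1 / l2) * (- sin x3)
  | 1%nat, 1%nat => (1 / l2) * cos x3
  | 2%nat, 2%nat => l1 * l2
  | _, _ => 0
  end.

(* The Riemannian metric in coordinates:
   l1^2 (cos x3 dx1 + sin x3 dx2)^2 + l2^2 (-sin x3 dx1 + cos x3 dx2)^2 + dx3^2/(l1^2 l2^2). *)
Definition metric (l1 l2 : R) (i j : nat) (p : pt) : R :=
  sum3 (fun a => coframe l1 l2 a i p * coframe l1 l2 a j p).

(* Inverse metric g^{ij} = sum_a E_a^i E_a^j (E is g-orthonormal). *)
Definition metric_inv (l1 l2 : R) (i j : nat) (p : pt) : R :=
  sum3 (fun a => frame l1 l2 a i p * frame l1 l2 a j p).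

Definition christoffel (l1 l2 : R) (k i j : nat) (p : pt) : R :=
  / 2 * sum3 (fun l => metric_inv l1 l2 k l p *
     (pderiv (metric l1 l2 j l) i p + pderiv (metric l1 l2 i l) j p
      - pderiv (metric l1 l2 i j) l p)).

Definition inner (l1 l2 : R) (p : pt) (x y : nat -> R) : R :=
  sum3 (fun i => sum3 (fun j => metric l1 l2 i j p * x i * y j)).

Definition pu (f : R -> R -> R) (u v : R) : R := Derive (fun s => f s v) u.
Definition pv (f : R -> R -> R) (u v : R) : R := Derive (fun t => f u t) v.

Fixpoint Ck (n : nat) (f : R -> R -> R) : Prop :=
  (forall u v, continuous (fun q : R * R => f (fst q) (snd q)) (u, v)) /\
  match n with
  | 0%nat => True
  | S m => (forall u v, ex_derive (fun s => f s v) u) /\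
           (forall u v, ex_derive (fun t => f u t) v) /\
           Ck m (pu f) /\ Ck m (pv f)
  end.

Definition Xc (X : R -> R -> pt) (k : nat) (u v : R) : R := coord (X u v) k.

Definition smooth_map (X : R -> R -> pt) : Prop :=
  forall n k, Ck n (Xc X k).

Definition Xu (X : R -> R -> pt) (u v : R) : nat -> R := fun k => pu (Xc X k) u v.
Definition Xv (X : R -> R -> pt) (u v : R) : nat -> R := fun k => pv (Xc X k) u v.

Definition immersion (X : R -> R -> pt) : Prop :=
  forall u v al be : R,
    (forall k, (k < 3)%nat -> al * Xu X u v k + be * Xv X u v k = 0) ->
    al = 0 /\ be = 0.

Definition fE l1 l2 X u v := inner l1 l2 (X u v) (Xu X u v) (Xu X u v).
Definition fF l1 l2 X u v := inner l1 l2 (X u v) (Xu X u v) (Xv X u v).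
Definition fG l1 l2 X u v := inner l1 l2 (X u v) (Xv X u v) (Xv X u v).

Definition conformal (l1 l2 : R) (X : R -> R -> pt) : Prop :=
  forall u v, fE l1 l2 X u v = fG l1 l2 X u v /\ fF l1 l2 X u v = 0.

Definition unit_normal (l1 l2 : R) (X : R -> R -> pt) (u v : R) (N : nat -> R) : Prop :=
  inner l1 l2 (X u v) N N = 1 /\
  inner l1 l2 (X u v) N (Xu X u v) = 0 /\
  inner l1 l2 (X u v) N (Xv X u v) = 0.

Definition cov_uu l1 l2 X u v : nat -> R := fun k =>
  pu (pu (Xc X k)) u v + sum3 (fun i => sum3 (fun j =>
     christoffel l1 l2 k i j (X u v) * Xu X u v i * Xu X u v j)).
Definition cov_uv l1 l2 X u v : nat -> R := fun k =>
  pv (pu (Xc X k)) u v + sum3 (fun i => sum3 (fun j =>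
     christoffel l1 l2 k i j (X u v) * Xu X u v i * Xv X u v j)).
Definition cov_vv l1 l2 X u v : nat -> R := fun k =>
  pv (pv (Xc X k)) u v + sum3 (fun i => sum3 (fun j =>
     christoffel l1 l2 k i j (X u v) * Xv X u v i * Xv X u v j)).

Definition mean_curvature l1 l2 X u v (N : nat -> R) : R :=
  let p := X u v in
  let l := inner l1 l2 p (cov_uu l1 l2 X u v) N in
  let m := inner l1 l2 p (cov_uv l1 l2 X u v) N in
  let n := inner l1 l2 p (cov_vv l1 l2 X u v) N in
  let E := fE l1 l2 X u v in
  let F := fF l1 l2 X u v in
  let G := fG l1 l2 X u v in
  (E * n - 2 * F * m + G * l) / (2 * (E * G - F ^ 2)).

Definition minimal (l1 l2 : R) (X : R -> R -> pt) : Prop :=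
  forall u v N, unit_normal l1 l2 X u v N -> mean_curvature l1 l2 X u v N = 0.

Definition frame_comp (l1 l2 : R) (p : pt) (N : nat -> R) (a : nat) : R :=
  inner l1 l2 p N (fun i => frame l1 l2 a i p).

(* Gauss map value (N1 + i N2)/(1 + N3) (meaningful when N3 <> -1). *)
Definition gauss_map (l1 l2 : R) (p : pt) (N : nat -> R) : C :=
  ((RtoC (frame_comp l1 l2 p N 0) + Ci * RtoC (frame_comp l1 l2 p N 1))
  / RtoC (1 + frame_comp l1 l2 p N 2))%C.

Definition bprime (l1 l2 K y : R) : R :=
  sqrt (l1 ^ 2 - K * (l1 ^ 2 * (cos y) ^ 2 + l2 ^ 2 * (sin y) ^ 2)).

Definition x3prime (l1 l2 K : R) (b : R -> R) (v : R) : R :=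
  l1 * l2 * K / (l1 + bprime l1 l2 K (b v)).

Definition Xmap (l1 l2 K : R) (b x3 : R -> R) (u v : R) : pt :=
  ( 1 / (l1 ^ 2 * l2) *
      ((1 / l1) * cos (x3 v) * sin (b v) + (1 / l2) * sin (x3 v) * cos (b v))
      * x3prime l1 l2 K b v * sinh (- l1 * u),
    1 / (l1 ^ 2 * l2) *
      ((1 / l1) * sin (x3 v) * sin (b v) - (1 / l2) * cos (x3 v) * cos (b v))
      * x3prime l1 l2 K b v * sinh (- l1 * u),
    x3 v ).

(* Everything is computed in the left-invariant frame E_1, E_2, E_3.  Put
   mu = K / (l1 + b'), so that x3' = l1 l2 mu.  Since b' ^ 2 = l1 ^ 2 - K Q(b) with
   Q(b) = l1 ^ 2 cos ^ 2 b + l2 ^ 2 sin ^ 2 b, the ODE for b gives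
     mu Q(b) = l1 - b'   and   mu' = - (l1 ^ 2 - l2 ^ 2) mu ^ 2 sin b cos b,
   and with these two identities
     X_u = mu cosh(-l1 u) (- sin b E_1 + cos b E_2),
     X_v = mu (sinh(-l1 u) (cos b E_1 + sin b E_2) + E_3).
   They are orthogonal with the same length mu cosh(-l1 u), so X is a conformal
   immersion when K <> 0.  Along a curve whose velocity is sum_a al_a E_a, the
   covariant derivative of the velocity has frame components al_a' + Gamma(al)_a,
   where the quadratic form Gamma comes from the brackets [E_3, E_1] = l2 ^ 2 E_2,
   [E_3, E_2] = - l1 ^ 2 E_1, [E_1, E_2] = 0; with it the tension field
   nabla_{X_u} X_u + nabla_{X_v} X_v vanishes, and a conformal harmonic map is
   minimal.  The unit normal is
     N = (cos b E_1 + sin b E_2 - sinh(-l1 u) E_3) / cosh(-l1 u),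
   and since cosh - sinh = exp(- .), its Gauss map is exp(-l1 u) exp(i b). *)

From Stdlib Require Import Reals Lra Lia Nsatz FunctionalExtensionality.
From Coquelicot Require Import Coquelicot.
Open Scope R_scope.

Lemma cos_sq_add_sin_sq (t : R) : cos t ^ 2 + sin t ^ 2 = 1.
Proof. rewrite <- (sin2_cos2 t); unfold Rsqr; ring. Qed.

Lemma cosh_sq_sub_sinh_sq x : cosh x ^ 2 - sinh x ^ 2 = 1.
Proof. unfold cosh, sinh. rewrite exp_Ropp. pose proof (exp_pos x). field. lra. Qed.

Lemma cosh_sub_sinh x : cosh x - sinh x = exp (- x).
Proof. unfold cosh, sinh. field. Qed.

Lemma cosh_pos x : 0 < cosh x.
Proof. unfold cosh. pose proof (exp_pos x); pose proof (exp_pos (- x)). lra. Qed.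

Lemma is_derive_sinh x : is_derive sinh x (cosh x).
Proof. apply is_derive_Reals, derivable_pt_lim_sinh. Qed.

Lemma is_derive_cosh x : is_derive cosh x (sinh x).
Proof. apply is_derive_Reals, derivable_pt_lim_cosh. Qed.

Definition in_frame (l1 l2 : R) (p : pt) (al : nat -> R) (k : nat) : R :=
  sum3 (fun a => al a * frame l1 l2 a k p).

(* Frame components of sum_a al_a dE_a/dx3, using dE_1/dx3 = (l2/l1) E_2 and
   dE_2/dx3 = - (l1/l2) E_1. *)
Definition dframe (l1 l2 : R) (al : nat -> R) (a : nat) : R :=
  match a with
  | 0%nat => - (l1 / l2) * al 1%nat
  | 1%nat => l2 / l1 * al 0%nat
  | _ => 0
  end.

(* Frame components of nabla_V V for the left-invariant field V = sum_a al_a E_a,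
   from <nabla_V V, Z> = <[Z, V], V>. *)
Definition conn_frame (l1 l2 : R) (al : nat -> R) (a : nat) : R :=
  match a with
  | 0%nat => - l2 ^ 2 * al 1%nat * al 2%nat
  | 1%nat => l1 ^ 2 * al 0%nat * al 2%nat
  | _ => (l2 ^ 2 - l1 ^ 2) * al 0%nat * al 1%nat
  end.

Definition coframe_dx3 (l1 l2 : R) (a i : nat) (p : pt) : R :=
  let x3 := coord p 2 in
  match a, i with
  | 0%nat, 0%nat => - l1 * sin x3
  | 0%nat, 1%nat => l1 * cos x3
  | 1%nat, 0%nat => - l2 * cos x3
  | 1%nat, 1%nat => - l2 * sin x3
  | _, _ => 0
  end.

Definition metric_dx3 (l1 l2 : R) (i j : nat) (p : pt) : R :=
  sum3 (fun a => coframe_dx3 l1 l2 a i p * coframe l1 l2 a j p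
               + coframe l1 l2 a i p * coframe_dx3 l1 l2 a j p).

Section Frame.

Variables l1 l2 : R.
Hypothesis Hl1 : l1 <> 0.
Hypothesis Hl2 : l2 <> 0.

Lemma in_frame_plus p (al be : nat -> R) k :
  in_frame l1 l2 p al k + in_frame l1 l2 p be k = in_frame l1 l2 p (fun a => al a + be a) k.
Proof. unfold in_frame, sum3. ring. Qed.

Lemma inner_ext p (x x' y y' : nat -> R) :
  (forall k, (k < 3)%nat -> x k = x' k) -> (forall k, (k < 3)%nat -> y k = y' k) ->
  inner l1 l2 p x y = inner l1 l2 p x' y'.
Proof. intros Hx Hy. unfold inner, sum3. rewrite !Hx, !Hy by lia. reflexivity. Qed.

Lemma pderiv_metric i j m p :
  pderiv (metric l1 l2 i j) m p
  = match m with 0%nat | 1%nat => 0 | _ => metric_dx3 l1 l2 i j p end.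
Proof.
  unfold pderiv. destruct p as [[x y] z]. destruct m as [|[|m]].
  1, 2: rewrite (Derive_ext _ (fun _ => metric l1 l2 i j (x, y, z)));
    [apply Derive_const|reflexivity].
  apply is_derive_unique. unfold metric, metric_dx3, coframe, coframe_dx3, sum3.
  destruct i as [|[|[|i]]], j as [|[|[|j]]]; simpl; auto_derive; auto; ring.
Qed.

Lemma inner_in_frame p al be :
  inner l1 l2 p (in_frame l1 l2 p al) (in_frame l1 l2 p be) = sum3 (fun a => al a * be a).
Proof.
  destruct p as [[x y] z]. pose proof (cos_sq_add_sin_sq z) as Hcs.
  unfold inner, metric, in_frame, coframe, frame, sum3; simpl.
  set (c := cos z) in *; set (s := sin z) in *.
  field_simplify_eq; auto. cbn [pow] in *. nsatz.
Qed.

Lemma frame_comp_in_frame p al a :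
  (a < 3)%nat -> frame_comp l1 l2 p (in_frame l1 l2 p al) a = al a.
Proof.
  intros Ha. destruct p as [[x y] z]. pose proof (cos_sq_add_sin_sq z) as Hcs.
  unfold frame_comp, inner, metric, in_frame, coframe, frame, sum3; simpl.
  set (c := cos z) in *; set (s := sin z) in *.
  destruct a as [|[|[|a]]]; try lia; field_simplify_eq; auto; cbn [pow] in *; nsatz.
Qed.

Lemma in_frame_eq0 p al :
  (forall k, (k < 3)%nat -> in_frame l1 l2 p al k = 0) ->
  forall a, (a < 3)%nat -> al a = 0.
Proof.
  intros H0 a Ha. rewrite <- (frame_comp_in_frame p al a Ha).
  unfold frame_comp, inner, sum3. rewrite !H0 by lia. ring.
Qed.

Lemma is_derive_in_frame (gam : R -> pt) (al : nat -> R -> R) (dal : nat -> R) dx3 t k :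
  is_derive (fun t => coord (gam t) 2) t dx3 ->
  (forall a, is_derive (al a) t (dal a)) ->
  is_derive (fun t => in_frame l1 l2 (gam t) (fun a => al a t) k) t
    (in_frame l1 l2 (gam t) (fun a => dal a + dx3 * dframe l1 l2 (fun b => al b t) a) k).
Proof.
  intros H3 Hal. set (z := fun t => coord (gam t) 2) in H3.
  (* The frame at a point only depends on its third coordinate. *)
  apply (is_derive_ext (fun t => in_frame l1 l2 (0, 0, z t) (fun a => al a t) k)).
  { intros s. unfold z. now destruct (gam s) as [[? ?] ?]. }
  replace (in_frame l1 l2 (gam t)) with (in_frame l1 l2 (0, 0, z t))
    by (unfold z; now destruct (gam t) as [[? ?] ?]).
  assert (D3 : Derive (fun x => z x) t = dx3) by now apply is_derive_unique.
  assert (Da : forall a, Derive (fun x => al a x) t = dal a)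
    by (intros; now apply is_derive_unique).
  assert (E3 : ex_derive z t) by (eexists; eauto).
  assert (Ea : forall a, ex_derive (al a) t) by (intros; eexists; eauto).
  clearbody z.
  unfold in_frame, dframe, frame, sum3; simpl.
  destruct k as [|[|[|k]]]; auto_derive; try (repeat split; auto; fail);
    rewrite ?D3, ?Da; field; auto.
Qed.

(* The coordinate Christoffel term is nabla_V V minus the rotation of the frame along
   the x3-component l1 l2 al_2 of V. *)
Lemma christoffel_in_frame p al k :
  sum3 (fun i => sum3 (fun j =>
    christoffel l1 l2 k i j p * in_frame l1 l2 p al i * in_frame l1 l2 p al j))
  = in_frame l1 l2 p (fun a => conn_frame l1 l2 al a - l1 * l2 * al 2%nat * dframe l1 l2 al a) k.
Proof.
  unfold christoffel, sum3. rewrite !pderiv_metric.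
  destruct p as [[x y] z]. pose proof (cos_sq_add_sin_sq z) as Hcs.
  unfold in_frame, conn_frame, dframe, metric_dx3, metric_inv, metric, coframe_dx3, coframe, frame, sum3.
  simpl. set (c := cos z) in *; set (s := sin z) in *.
  destruct k as [|[|[|k]]]; field_simplify_eq; auto; cbn [pow] in *; nsatz.
Qed.

Lemma cov_velocity_in_frame (gam : R -> pt) (al : nat -> R -> R) (dal : nat -> R) t k :
  is_derive (fun t => coord (gam t) 2) t (in_frame l1 l2 (gam t) (fun a => al a t) 2) ->
  (forall a, is_derive (al a) t (dal a)) ->
  Derive (fun t => in_frame l1 l2 (gam t) (fun a => al a t) k) t
  + sum3 (fun i => sum3 (fun j => christoffel l1 l2 k i j (gam t)
      * in_frame l1 l2 (gam t) (fun a => al a t) i * in_frame l1 l2 (gam t) (fun a => al a t) j))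
  = in_frame l1 l2 (gam t) (fun a => dal a + conn_frame l1 l2 (fun b => al b t) a) k.
Proof.
  intros H3 Hal.
  rewrite (is_derive_unique (fun t : R => in_frame l1 l2 (gam t) (fun a => al a t) k) t _
             (is_derive_in_frame _ _ _ _ _ k H3 Hal)).
  rewrite christoffel_in_frame.
  destruct (gam t) as [[x y] z].
  unfold in_frame, conn_frame, dframe, frame, sum3; simpl.
  destruct k as [|[|[|k]]]; field; auto.
Qed.

End Frame.

Lemma minimal_of_conformal_harmonic l1 l2 X :
  conformal l1 l2 X ->
  (forall u v k, (k < 3)%nat -> cov_uu l1 l2 X u v k + cov_vv l1 l2 X u v k = 0) ->
  minimal l1 l2 X.
Proof.
  intros Hconf Htens u v N _. destruct (Hconf u v) as [HEG HF].
  assert (Hln : inner l1 l2 (X u v) (cov_uu l1 l2 X u v) N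
              + inner l1 l2 (X u v) (cov_vv l1 l2 X u v) N = 0).
  { pose proof (Htens u v 0%nat ltac:(lia)) as T0.
    pose proof (Htens u v 1%nat ltac:(lia)) as T1.
    pose proof (Htens u v 2%nat ltac:(lia)) as T2.
    unfold inner, sum3.
    replace (cov_vv l1 l2 X u v 0) with (- cov_uu l1 l2 X u v 0) by lra.
    replace (cov_vv l1 l2 X u v 1) with (- cov_uu l1 l2 X u v 1) by lra.
    replace (cov_vv l1 l2 X u v 2) with (- cov_uu l1 l2 X u v 2) by lra.
    ring. }
  unfold mean_curvature; cbv zeta. rewrite HF, <- HEG.
  set (E := fE l1 l2 X u v).
  set (l := inner l1 l2 (X u v) (cov_uu l1 l2 X u v) N) in *.
  set (n := inner l1 l2 (X u v) (cov_vv l1 l2 X u v) N) in *.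
  replace (E * n - 2 * 0 * _ + E * l) with (E * (l + n)) by ring.
  rewrite Hln. unfold Rdiv; ring.
Qed.

Fixpoint Ck1 (n : nat) (f : R -> R) : Prop :=
  (forall x, continuous f x) /\
  match n with
  | 0%nat => True
  | S m => (forall x, ex_derive f x) /\ Ck1 m (Derive f)
  end.

Lemma Ck1_continuous n f x : Ck1 n f -> continuous f x.
Proof. destruct n; intros Hf; apply Hf. Qed.

Lemma Ck1_S n f : Ck1 (S n) f -> Ck1 n f.
Proof.
  revert f; induction n as [|n IH]; intros f [Hc [Hd Hf]].
  - now split.
  - repeat split; auto.
Qed.

Lemma Ck1_intro n (f f' : R -> R) : (forall x, is_derive f x (f' x)) -> Ck1 n f' -> Ck1 (S n) f.
Proof.
  intros Hd Hf'. split; [|split].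
  - intros x. apply (@ex_derive_continuous R_AbsRing R_NormedModule). eexists; apply Hd.
  - intros x. eexists; apply Hd.
  - replace (Derive f) with f'; auto.
    extensionality x. symmetry. now apply is_derive_unique.
Qed.

Lemma Ck1_const n c : Ck1 n (fun _ => c).
Proof.
  revert c; induction n as [|n IH]; intros c.
  - split; auto. intros; apply continuous_const.
  - apply Ck1_intro with (fun _ => 0); auto. intros; auto_derive; auto.
Qed.

Lemma Ck1_id n : Ck1 n (fun x => x).
Proof.
  destruct n as [|n].
  - split; auto. intros; apply continuous_id.
  - apply Ck1_intro with (fun _ => 1); [intros; auto_derive; auto|apply Ck1_const].
Qed.

Lemma Ck1_plus n f g : Ck1 n f -> Ck1 n g -> Ck1 n (fun x => f x + g x).
Proof.
  revert f g; induction n as [|n IH]; intros f g Hf Hg.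
  - split; auto. intros x. apply (continuous_plus f g); [apply Hf|apply Hg].
  - apply Ck1_intro with (fun x => Derive f x + Derive g x).
    + intros x. apply (is_derive_plus f g); apply Derive_correct; [apply Hf|apply Hg].
    + apply IH; [apply Hf|apply Hg].
Qed.

Lemma Ck1_mult n f g : Ck1 n f -> Ck1 n g -> Ck1 n (fun x => f x * g x).
Proof.
  revert f g; induction n as [|n IH]; intros f g Hf Hg.
  - split; auto. intros x. apply (continuous_mult f g); [apply Hf|apply Hg].
  - apply Ck1_intro with (fun x => Derive f x * g x + f x * Derive g x).
    + intros x. apply (is_derive_mult f g);
        [apply Derive_correct, Hf|apply Derive_correct, Hg|intros; apply Rmult_comm].
    + apply Ck1_plus; apply IH;
        [apply Hf|now apply Ck1_S|now apply Ck1_S|apply Hg].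
Qed.

Lemma Ck1_opp n f : Ck1 n f -> Ck1 n (fun x => - f x).
Proof.
  intros Hf. replace (fun x => - f x) with (fun x => (-1) * f x)
    by (extensionality x; ring).
  apply Ck1_mult; [apply Ck1_const|exact Hf].
Qed.

Lemma Ck1_pow n f k : Ck1 n f -> Ck1 n (fun x => f x ^ k).
Proof.
  intros Hf. induction k as [|k IH]; simpl; [apply Ck1_const|now apply Ck1_mult].
Qed.

Lemma Ck1_comp n g h : (forall m, Ck1 m g) -> Ck1 n h -> Ck1 n (fun x => g (h x)).
Proof.
  revert g h; induction n as [|n IH]; intros g h Hg Hh.
  - split; auto. intros x. apply (continuous_comp h g); [apply Hh|apply (Hg 0%nat)].
  - apply Ck1_intro with (fun x => Derive h x * Derive g (h x)).
    + intros x. apply (is_derive_comp g h); apply Derive_correct; [apply (Hg 1%nat)|apply Hh].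
    + apply Ck1_mult; [apply Hh|].
      apply (IH (Derive g)); [intros m; apply (Hg (S m))|now apply Ck1_S].
Qed.

Lemma Ck1_sin_cos n : Ck1 n sin /\ Ck1 n cos.
Proof.
  induction n as [|n [Hs Hc]].
  - split; split; auto; intros x; apply continuity_pt_filterlim;
      [apply continuity_sin|apply continuity_cos].
  - split.
    + apply Ck1_intro with cos; auto. intros x. auto_derive; auto; ring.
    + apply Ck1_intro with (fun x => - sin x); [|now apply Ck1_opp].
      intros x. auto_derive; auto; ring.
Qed.

Lemma Ck1_sinh_cosh n : Ck1 n sinh /\ Ck1 n cosh.
Proof.
  induction n as [|n [Hs Hc]].
  - split; split; auto; intros x; apply (@ex_derive_continuous R_AbsRing R_NormedModule); eexists;
      [apply is_derive_sinh|apply is_derive_cosh].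
  - split; [apply Ck1_intro with cosh|apply Ck1_intro with sinh]; auto;
      [apply is_derive_sinh|apply is_derive_cosh].
Qed.

Ltac solve_Ck1 :=
  repeat match goal with
  | |- Ck1 _ (fun _ => ?c) => apply Ck1_const
  | |- Ck1 _ (fun x => x) => apply Ck1_id
  | |- Ck1 _ (fun x => @?f x + @?g x) => apply (Ck1_plus _ f g)
  | |- Ck1 _ (fun x => @?f x - @?g x) => apply (Ck1_plus _ f (fun x => - g x))
  | |- Ck1 _ (fun x => - @?f x) => apply (Ck1_opp _ f)
  | |- Ck1 _ (fun x => @?f x * @?g x) => apply (Ck1_mult _ f g)
  | |- Ck1 _ (fun x => @?f x ^ ?k) => apply (Ck1_pow _ f k)
  | |- Ck1 _ (fun x => sin (@?f x)) => apply (Ck1_comp _ sin f); [intros ?m; apply Ck1_sin_cos|]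
  | |- Ck1 _ (fun x => cos (@?f x)) => apply (Ck1_comp _ cos f); [intros ?m; apply Ck1_sin_cos|]
  | |- Ck1 _ (fun x => sinh (@?f x)) => apply (Ck1_comp _ sinh f); [intros ?m; apply Ck1_sinh_cosh|]
  | H : Ck1 ?n ?f |- Ck1 ?n (fun x => ?f x) => exact H
  end.

Lemma Ck_separated n (G A : R -> R) :
  Ck1 n G -> Ck1 n A -> Ck n (fun u v => G v * A u).
Proof.
  revert G A; induction n as [|n IH]; intros G A HG HA;
    (split; [intros u v;
      apply (continuous_mult (fun q : R * R => G (snd q)) (fun q : R * R => A (fst q)));
      [apply (continuous_comp snd G); [apply continuous_snd|eapply Ck1_continuous; eassumption]
      |apply (continuous_comp fst A); [apply continuous_fst|eapply Ck1_continuous; eassumption]]|]);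
    auto.
  split; [|split; [|split]].
  - intros u v. apply ex_derive_scal. apply HA.
  - intros u v. apply (ex_derive_mult G (fun _ => A u)); [apply HG|apply ex_derive_const].
  - replace (pu (fun u v => G v * A u)) with (fun u v => G v * Derive A u).
    + apply IH; [now apply Ck1_S|apply HA].
    + extensionality u; extensionality v. unfold pu. now rewrite Derive_scal.
  - replace (pv (fun u v => G v * A u)) with (fun u v => Derive G v * A u).
    + apply IH; [apply HG|now apply Ck1_S].
    + extensionality u; extensionality v. unfold pv.
      rewrite (Derive_ext (fun t => G t * A u) (fun t => A u * G t)) by (intros; ring).
      rewrite Derive_scal. ring.
Qed.

(* auto_derive states equalities in a Coquelicot carrier; ring and field need them in R. *)
Ltac as_real_eq := match goal with |- ?a = ?c => change (@eq R a c) end.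

Section Surface.

Variables l1 l2 K : R.
Variables b x3 : R -> R.
Hypothesis Hl1 : 0 < l1.
Hypothesis Hl2 : 0 < l2.
Hypothesis Hl21 : l2 <= l1.
Hypothesis HK : Rabs K < 1.
Hypothesis Hb : forall v, is_derive b v (bprime l1 l2 K (b v)).
Hypothesis Hx3 : forall v, is_derive x3 v (x3prime l1 l2 K b v).

Let l1_neq0 : l1 <> 0 := Rgt_not_eq _ _ Hl1.
Let l2_neq0 : l2 <> 0 := Rgt_not_eq _ _ Hl2.

Local Notation X := (Xmap l1 l2 K b x3).

Lemma radicand_pos y : 0 < l1 ^ 2 - K * (l1 ^ 2 * cos y ^ 2 + l2 ^ 2 * sin y ^ 2).
Proof.
  pose proof (cos_sq_add_sin_sq y) as Hcs. pose proof (Rle_abs K). pose proof (Rabs_pos K).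
  set (Q := l1 ^ 2 * cos y ^ 2 + l2 ^ 2 * sin y ^ 2).
  assert (Hc2 : 0 <= cos y ^ 2) by apply pow2_ge_0.
  assert (Hs2 : 0 <= sin y ^ 2) by apply pow2_ge_0.
  assert (Hl : l2 ^ 2 <= l1 ^ 2) by (apply pow_incr; lra).
  assert (HQ0 : 0 <= Q) by (unfold Q; nra).
  assert (HQ1 : Q <= l1 ^ 2) by (unfold Q; nra).
  assert (0 < l1 ^ 2) by (apply pow_lt; lra).
  assert (K * Q <= Rabs K * Q) by (apply Rmult_le_compat_r; lra).
  nra.
Qed.

Definition b' (v : R) : R := bprime l1 l2 K (b v).

Lemma b'_pos v : 0 < b' v.
Proof. apply sqrt_lt_R0, radicand_pos. Qed.

Definition mu (v : R) : R := K / (l1 + b' v).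

Lemma x3prime_mu v : x3prime l1 l2 K b v = l1 * l2 * mu v.
Proof. unfold x3prime, mu, b'. pose proof (b'_pos v). field. unfold b' in *; lra. Qed.

Lemma b'_mu v : b' v = l1 - mu v * (l1 ^ 2 * cos (b v) ^ 2 + l2 ^ 2 * sin (b v) ^ 2).
Proof.
  pose proof (b'_pos v) as Hpos.
  assert (Hsq : b' v ^ 2 = l1 ^ 2 - K * (l1 ^ 2 * cos (b v) ^ 2 + l2 ^ 2 * sin (b v) ^ 2))
    by (unfold b', bprime; rewrite pow2_sqrt; [reflexivity|left; apply radicand_pos]).
  unfold mu. field_simplify_eq; [nra|lra].
Qed.

Lemma is_derive_b' v : is_derive b' v (K * (l1 ^ 2 - l2 ^ 2) * sin (b v) * cos (b v)).
Proof.
  pose proof (b'_pos v) as Hpos. pose proof (radicand_pos (b v)) as Hrad.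
  unfold b', bprime in *. auto_derive.
  - repeat split; first [eexists; apply Hb|exact Hrad].
  - rewrite (is_derive_unique (fun x : R => b x) v _ (Hb v)).
    as_real_eq.
    unfold Rminus in *; cbn [pow] in Hpos |- *. field. lra.
Qed.

Definition dmu (v : R) : R := - (l1 ^ 2 - l2 ^ 2) * mu v ^ 2 * sin (b v) * cos (b v).

Lemma is_derive_mu v : is_derive mu v (dmu v).
Proof.
  pose proof (b'_pos v) as Hpos.
  unfold dmu, mu. auto_derive.
  - repeat split; try lra. eexists; apply is_derive_b'.
  - rewrite (is_derive_unique (fun x : R => b' x) v _ (is_derive_b' v)).
    as_real_eq. field. lra.
Qed.

(* No square root is needed: b', mu' and x3' are polynomial in mu and trigonometric in b. *)
Lemma Ck1_b_mu_x3 n : Ck1 n b /\ Ck1 n mu /\ Ck1 n x3.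
Proof.
  induction n as [|n (IHb & IHmu & IHx3)].
  - split; [|split]; (split; [intros v; apply (@ex_derive_continuous R_AbsRing R_NormedModule)|exact I]);
      eexists; [apply Hb|apply is_derive_mu|apply Hx3].
  - split; [|split].
    + apply Ck1_intro with (fun v => l1 - mu v * (l1 ^ 2 * cos (b v) ^ 2 + l2 ^ 2 * sin (b v) ^ 2)).
      * intros v. rewrite <- b'_mu. apply Hb.
      * solve_Ck1.
    + apply Ck1_intro with dmu; [apply is_derive_mu|unfold dmu; solve_Ck1].
    + apply Ck1_intro with (fun v => l1 * l2 * mu v).
      * intros v. rewrite <- x3prime_mu. apply Hx3.
      * solve_Ck1.
Qed.

(* Side conditions and derivatives of b, mu and x3 are dispatched by shape: trying every
   ODE on every goal makes unification unfold the real operations and is very slow. *)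
Ltac derive_with_odes :=
  auto_derive;
  [repeat split; match goal with
    | |- ex_derive (fun x => b x) _ => eexists; apply Hb
    | |- ex_derive (fun x => mu x) _ => eexists; apply is_derive_mu
    | |- ex_derive (fun x => x3 x) _ => eexists; apply Hx3
    end
  |repeat match goal with
    | |- context [Derive (fun x => b x) ?v] =>
        rewrite (is_derive_unique (fun x : R => b x) v (b' v) (Hb v))
    | |- context [Derive (fun x => mu x) ?v] =>
        rewrite (is_derive_unique (fun x : R => mu x) v _ (is_derive_mu v))
    | |- context [Derive (fun x => x3 x) ?v] =>
        rewrite (is_derive_unique (fun x : R => x3 x) v _ (Hx3 v))
    end;
   as_real_eq].

(* Frame coefficients of the coordinate vector X(u, v), taken at the point X(u, v). *)
Definition pos_frame (u v : R) (a : nat) : R :=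
  match a with
  | 0%nat => sinh (- l1 * u) * mu v * sin (b v) / l1
  | 1%nat => - sinh (- l1 * u) * mu v * cos (b v) / l1
  | _ => x3 v / (l1 * l2)
  end.

Definition Xu_frame (u v : R) (a : nat) : R :=
  match a with
  | 0%nat => - mu v * cosh (- l1 * u) * sin (b v)
  | 1%nat => mu v * cosh (- l1 * u) * cos (b v)
  | _ => 0
  end.

Definition Xv_frame (u v : R) (a : nat) : R :=
  match a with
  | 0%nat => mu v * sinh (- l1 * u) * cos (b v)
  | 1%nat => mu v * sinh (- l1 * u) * sin (b v)
  | _ => mu v
  end.

Lemma Xmap_in_frame u v k :
  (k < 3)%nat -> coord (X u v) k = in_frame l1 l2 (X u v) (pos_frame u v) k.
Proof.
  intros Hk. pose proof (b'_pos v).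
  unfold in_frame, pos_frame, frame, sum3, Xmap, x3prime, mu, b' in *; simpl.
  destruct k as [|[|[|k]]]; try lia; cbn [coord fst snd]; field; lra.
Qed.

Lemma is_derive_u_pos_frame u v a : is_derive (fun s => pos_frame s v a) u (Xu_frame u v a).
Proof.
  unfold pos_frame, Xu_frame.
  destruct a as [|[|a]]; auto_derive; try (repeat split; eexists; apply is_derive_sinh);
    rewrite ?(is_derive_unique sinh _ _ (is_derive_sinh _));
    as_real_eq; field; lra.
Qed.

Lemma Xu_in_frame u v k :
  (k < 3)%nat -> Xu X u v k = in_frame l1 l2 (X u v) (Xu_frame u v) k.
Proof.
  intros Hk. unfold Xu, pu, Xc.
  rewrite (Derive_ext (fun s => coord (X s v) k)
             (fun s => in_frame l1 l2 (X s v) (fun a => pos_frame s v a) k))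
    by (intros; now apply Xmap_in_frame).
  apply is_derive_unique.
  replace (in_frame l1 l2 (X u v) (Xu_frame u v) k)
    with (in_frame l1 l2 (X u v)
            (fun a => Xu_frame u v a + 0 * dframe l1 l2 (pos_frame u v) a) k).
  - apply (is_derive_in_frame l1 l2 l1_neq0 l2_neq0 (fun s => X s v) (fun a s => pos_frame s v a)).
    + apply (is_derive_ext (fun _ => x3 v)); [reflexivity|auto_derive; auto].
    + intros a. apply is_derive_u_pos_frame.
  - f_equal. extensionality a. ring.
Qed.

Lemma is_derive_v_pos_frame u v a :
  is_derive (fun t => pos_frame u t a) v
    (Xv_frame u v a - l1 * l2 * mu v * dframe l1 l2 (pos_frame u v) a).
Proof.
  pose proof (cos_sq_add_sin_sq (b v)) as Hcs.
  unfold pos_frame, Xv_frame, dframe.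
  destruct a as [|[|a]]; derive_with_odes; unfold dmu; rewrite ?x3prime_mu, ?b'_mu;
    field_simplify_eq; try lra; cbn [pow] in *; nsatz.
Qed.

Lemma Xv_in_frame u v k :
  (k < 3)%nat -> Xv X u v k = in_frame l1 l2 (X u v) (Xv_frame u v) k.
Proof.
  intros Hk. unfold Xv, pv, Xc.
  rewrite (Derive_ext (fun t => coord (X u t) k)
             (fun t => in_frame l1 l2 (X u t) (fun a => pos_frame u t a) k))
    by (intros; now apply Xmap_in_frame).
  apply is_derive_unique.
  replace (in_frame l1 l2 (X u v) (Xv_frame u v) k)
    with (in_frame l1 l2 (X u v)
            (fun a => (Xv_frame u v a - l1 * l2 * mu v * dframe l1 l2 (pos_frame u v) a)
                      + x3prime l1 l2 K b v * dframe l1 l2 (pos_frame u v) a) k).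
  - apply (is_derive_in_frame l1 l2 l1_neq0 l2_neq0
             (fun t => X u t) (fun a t => pos_frame u t a)).
    + apply Hx3.
    + intros a. apply is_derive_v_pos_frame.
  - f_equal. extensionality a. rewrite x3prime_mu. ring.
Qed.

Lemma smooth_Xmap : smooth_map X.
Proof.
  intros n k. destruct (Ck1_b_mu_x3 n) as (Hbn & Hmun & Hx3n).
  assert (Hsh : Ck1 n (fun u => sinh (- l1 * u))) by solve_Ck1.
  assert (Hx3p : Ck1 n (x3prime l1 l2 K b)).
  { replace (x3prime l1 l2 K b) with (fun v => l1 * l2 * mu v)
      by (extensionality v; symmetry; apply x3prime_mu).
    solve_Ck1. }
  unfold Xc, Xmap. destruct k as [|[|k]]; cbn [coord fst snd].
  1, 2: match goal with |- Ck ?m (fun u v => @?G v * @?A u) => apply (Ck_separated m G A) end;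
    [solve_Ck1|exact Hsh].
  replace (fun u v : R => x3 v) with (fun u v : R => x3 v * (fun _ => 1) u)
    by (extensionality u; extensionality v; ring).
  apply Ck_separated; [exact Hx3n|apply Ck1_const].
Qed.

Lemma conformal_Xmap : conformal l1 l2 X.
Proof.
  intros u v. unfold fE, fF, fG.
  assert (Hu : forall k, (k < 3)%nat -> Xu X u v k = in_frame l1 l2 (X u v) (Xu_frame u v) k)
    by (intros; now apply Xu_in_frame).
  assert (Hv : forall k, (k < 3)%nat -> Xv X u v k = in_frame l1 l2 (X u v) (Xv_frame u v) k)
    by (intros; now apply Xv_in_frame).
  rewrite (inner_ext _ _ _ _ _ _ _ Hu Hu), (inner_ext _ _ _ _ _ _ _ Hu Hv),
    (inner_ext _ _ _ _ _ _ _ Hv Hv), !inner_in_frame by lra.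
  pose proof (cos_sq_add_sin_sq (b v)) as Hcs. pose proof (cosh_sq_sub_sinh_sq (- l1 * u)) as Hch.
  unfold sum3, Xu_frame, Xv_frame. split; [cbn [pow] in *; nsatz|ring].
Qed.

Lemma mu_neq0 v : K <> 0 -> mu v <> 0.
Proof.
  intros HK0. pose proof (b'_pos v). unfold mu, Rdiv.
  apply Rmult_integral_contrapositive_currified; [exact HK0|apply Rinv_neq_0_compat; lra].
Qed.

Lemma immersion_Xmap : K <> 0 -> immersion X.
Proof.
  intros HK0 u v al be H.
  assert (Hfr : forall a, (a < 3)%nat -> al * Xu_frame u v a + be * Xv_frame u v a = 0).
  { apply (in_frame_eq0 l1 l2 l1_neq0 l2_neq0 (X u v)).
    intros k Hk. rewrite <- (H k Hk), Xu_in_frame, Xv_in_frame by exact Hk.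
    unfold in_frame, sum3. ring. }
  pose proof (Hfr 0%nat ltac:(lia)) as H0. pose proof (Hfr 1%nat ltac:(lia)) as H1.
  pose proof (Hfr 2%nat ltac:(lia)) as H2. unfold Xu_frame, Xv_frame in H0, H1, H2.
  pose proof (mu_neq0 v HK0) as Hmu. pose proof (cosh_pos (- l1 * u)) as Hch.
  assert (Hbe : be = 0).
  { apply (Rmult_eq_reg_r (mu v)); [lra|exact Hmu]. }
  subst be.
  assert (Hal : al * (mu v * cosh (- l1 * u)) = 0).
  { pose proof (cos_sq_add_sin_sq (b v)) as Hcs. cbn [pow] in Hcs. clear - H0 H1 Hcs. nsatz. }
  split; [|reflexivity].
  apply Rmult_integral in Hal as [Hal|Hal]; [exact Hal|].
  apply Rmult_integral in Hal as [Hal|Hal]; lra.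
Qed.

Definition du_Xu_frame (u v : R) (a : nat) : R :=
  match a with
  | 0%nat => l1 * mu v * sinh (- l1 * u) * sin (b v)
  | 1%nat => - l1 * mu v * sinh (- l1 * u) * cos (b v)
  | _ => 0
  end.

Definition dv_Xv_frame (u v : R) (a : nat) : R :=
  match a with
  | 0%nat => (dmu v * cos (b v) - mu v * b' v * sin (b v)) * sinh (- l1 * u)
  | 1%nat => (dmu v * sin (b v) + mu v * b' v * cos (b v)) * sinh (- l1 * u)
  | _ => dmu v
  end.

Lemma cov_uu_in_frame u v k :
  (k < 3)%nat ->
  cov_uu l1 l2 X u v k
  = in_frame l1 l2 (X u v) (fun a => du_Xu_frame u v a + conn_frame l1 l2 (Xu_frame u v) a) k.
Proof.
  intros Hk.
  rewrite <- (cov_velocity_in_frame l1 l2 l1_neq0 l2_neq0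
                (fun s => X s v) (fun a s => Xu_frame s v a)).
  - unfold cov_uu, sum3. rewrite !Xu_in_frame by lia. f_equal.
    unfold pu. apply Derive_ext. intros s. now apply Xu_in_frame.
  - apply (is_derive_ext (fun _ => x3 v)); [reflexivity|].
    replace (in_frame l1 l2 (X u v) (fun a => Xu_frame u v a) 2) with 0
      by (unfold in_frame, frame, sum3, Xu_frame; simpl; ring).
    auto_derive; auto.
  - intros a. unfold Xu_frame, du_Xu_frame.
    destruct a as [|[|a]]; auto_derive;
      try (repeat split; eexists; apply is_derive_cosh);
      rewrite ?(is_derive_unique cosh _ _ (is_derive_cosh _));
      as_real_eq; ring.
Qed.

Lemma cov_vv_in_frame u v k :
  (k < 3)%nat ->
  cov_vv l1 l2 X u v k
  = in_frame l1 l2 (X u v) (fun a => dv_Xv_frame u v a + conn_frame l1 l2 (Xv_frame u v) a) k.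
Proof.
  intros Hk.
  rewrite <- (cov_velocity_in_frame l1 l2 l1_neq0 l2_neq0
                (fun t => X u t) (fun a t => Xv_frame u t a)).
  - unfold cov_vv, sum3. rewrite !Xv_in_frame by lia. f_equal.
    unfold pv. apply Derive_ext. intros t. now apply Xv_in_frame.
  - replace (in_frame l1 l2 (X u v) (fun a => Xv_frame u v a) 2) with (x3prime l1 l2 K b v)
      by (rewrite x3prime_mu; unfold in_frame, frame, sum3, Xv_frame; simpl; ring).
    apply Hx3.
  - intros a. unfold Xv_frame, dv_Xv_frame.
    destruct a as [|[|a]]; derive_with_odes; ring.
Qed.

Lemma harmonic_frame u v a :
  du_Xu_frame u v a + conn_frame l1 l2 (Xu_frame u v) a
  + (dv_Xv_frame u v a + conn_frame l1 l2 (Xv_frame u v) a) = 0.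
Proof.
  pose proof (cos_sq_add_sin_sq (b v)) as Hcs.
  pose proof (cosh_sq_sub_sinh_sq (- l1 * u)) as Hch.
  unfold du_Xu_frame, dv_Xv_frame, conn_frame, Xu_frame, Xv_frame, dmu. rewrite b'_mu.
  destruct a as [|[|a]]; cbn [pow] in *; nsatz.
Qed.

Lemma tension_Xmap u v k :
  (k < 3)%nat -> cov_uu l1 l2 X u v k + cov_vv l1 l2 X u v k = 0.
Proof.
  intros Hk. rewrite cov_uu_in_frame, cov_vv_in_frame by exact Hk.
  rewrite in_frame_plus.
  replace (fun a => _ + _) with (fun _ : nat => 0) by (extensionality a; symmetry; apply harmonic_frame).
  unfold in_frame, sum3. ring.
Qed.

Definition normal_frame (u v : R) (a : nat) : R :=
  match a with
  | 0%nat => cos (b v) / cosh (- l1 * u)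
  | 1%nat => sin (b v) / cosh (- l1 * u)
  | _ => - sinh (- l1 * u) / cosh (- l1 * u)
  end.

Lemma unit_normal_Xmap u v : unit_normal l1 l2 X u v (in_frame l1 l2 (X u v) (normal_frame u v)).
Proof.
  assert (Hu : forall k, (k < 3)%nat -> Xu X u v k = in_frame l1 l2 (X u v) (Xu_frame u v) k)
    by (intros; now apply Xu_in_frame).
  assert (Hv : forall k, (k < 3)%nat -> Xv X u v k = in_frame l1 l2 (X u v) (Xv_frame u v) k)
    by (intros; now apply Xv_in_frame).
  unfold unit_normal.
  rewrite (inner_ext _ _ _ _ _ _ _ (fun _ _ => eq_refl) Hu),
    (inner_ext _ _ _ _ _ _ _ (fun _ _ => eq_refl) Hv), !inner_in_frame by lra.
  pose proof (cos_sq_add_sin_sq (b v)) as Hcs. pose proof (cosh_sq_sub_sinh_sq (- l1 * u)) as Hch.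
  pose proof (cosh_pos (- l1 * u)) as Hpos.
  unfold sum3, normal_frame, Xu_frame, Xv_frame.
  repeat split; field_simplify_eq; try lra.
  cbn [pow] in Hcs |- *. clear - Hcs. nsatz.
Qed.

Lemma gauss_map_Xmap u v :
  1 + frame_comp l1 l2 (X u v) (in_frame l1 l2 (X u v) (normal_frame u v)) 2 <> 0 /\
  gauss_map l1 l2 (X u v) (in_frame l1 l2 (X u v) (normal_frame u v))
  = (RtoC (exp (- l1 * u)) * (RtoC (cos (b v)) + Ci * RtoC (sin (b v))))%C.
Proof.
  assert (Hden : 1 + normal_frame u v 2 = exp (l1 * u) / cosh (- l1 * u)).
  { pose proof (cosh_pos (- l1 * u)). unfold normal_frame.
    replace (exp (l1 * u)) with (cosh (- l1 * u) - sinh (- l1 * u))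
      by (rewrite cosh_sub_sinh; f_equal; ring).
    field. lra. }
  pose proof (cosh_pos (- l1 * u)). pose proof (exp_pos (l1 * u)).
  unfold gauss_map. rewrite !frame_comp_in_frame, Hden by (lra || lia).
  split; [apply Rgt_not_eq, Rdiv_lt_0_compat; lra|].
  replace (exp (- l1 * u)) with (/ exp (l1 * u)) by (rewrite <- exp_Ropp; f_equal; ring).
  unfold normal_frame, Cdiv, Cmult, Cinv, Cplus, RtoC, Ci; simpl.
  apply injective_projections; simpl; field; lra.
Qed.

End Surface.

Theorem theorem4p1 (l1 l2 K : R) (b x3 : R -> R)
  (Hl : (l1 > l2 /\ l2 > 0) \/ (l1 = 1 /\ l2 = 1))
  (HK0 : K <> 0) (HK1 : Rabs K < 1)
  (Hb : forall v, is_derive b v (bprime l1 l2 K (b v))) (Hb0 : b 0 = 0)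
  (Hx3 : forall v, is_derive x3 v (x3prime l1 l2 K b v)) (Hx30 : x3 0 = 0) :
  smooth_map (Xmap l1 l2 K b x3) /\
  immersion (Xmap l1 l2 K b x3) /\
  conformal l1 l2 (Xmap l1 l2 K b x3) /\
  minimal l1 l2 (Xmap l1 l2 K b x3) /\
  exists N : R -> R -> (nat -> R),
    forall u v,
      unit_normal l1 l2 (Xmap l1 l2 K b x3) u v (N u v) /\
      1 + frame_comp l1 l2 (Xmap l1 l2 K b x3 u v) (N u v) 2 <> 0 /\
      gauss_map l1 l2 (Xmap l1 l2 K b x3 u v) (N u v)
        = (RtoC (exp (- l1 * u)) * (RtoC (cos (b v)) + Ci * RtoC (sin (b v))))%C.
Proof.
  assert (Hl1 : 0 < l1) by (destruct Hl; lra).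
  assert (Hl2 : 0 < l2) by (destruct Hl; lra).
  assert (Hl21 : l2 <= l1) by (destruct Hl; lra).
  split; [now apply smooth_Xmap|].
  split; [now apply immersion_Xmap|].
  split; [now apply conformal_Xmap|].
  split.
  - apply minimal_of_conformal_harmonic; [now apply conformal_Xmap|].
    intros u v k Hk. now apply tension_Xmap.
  - exists (fun u v => in_frame l1 l2 (Xmap l1 l2 K b x3 u v) (normal_frame l1 b u v)).
    intros u v. split; [now apply unit_normal_Xmap|now apply gauss_map_Xmap].
Qed.
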